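(* Let $G$ be a map graph with a corresponding planar bipartite graph $B$, let $\ell\in\mathbb{N}$, let $\mathcal{D}=(T,\beta_{\mathcal{D}})$ be a tree decomposition of $B$ of width less than $\ell$, and let $\mathcal{D}'=(T,\beta_{\mathcal{D}'})$ be the pair defined by $\beta_{\mathcal{D}'}(t)=(\beta_{\mathcal{D}}(t)\cap V(G))\cup\bigcup_{s\in\beta_{\mathcal{D}}(t)\cap S(G)}\big(N_B(s)\cap\gamma_{\mathcal{D}}(t)\big)$ for every node $t\in V(T)$. Then $\mathcal{D}'$ is a tree decomposition of $G$.
   Context: All graphs are finite and simple. For a bipartite graph $B$ with bipartition $V(B)=W\uplus U$, the half-square of $B$ is the graph with vertex set $W$ in which two vertices are adjacent iff they are at distance exactly $2$ in $B$. A graph $G$ is a map graph iff it is the half-square of some planar bipartite graph $B$; such a $B$ (with $W=V(G)$) is a corresponding planar bipartite graph, and the vertices of $U$ are called special vertices, denoted $S(G)$. A tree decomposition of a graph $H$ is a pair $(T,\beta)$ with $T$ a rooted tree and $\beta:V(T)\to 2^{V(H)}$ such that every vertex lies in some bag, every edge has both endpoints in some bag, and for every vertex $v$ the nodes whose bags contain $v$ induce a connected subtree; its width is the maximum bag size minus one. For a node $t$, $\gamma_{\mathcal{D}}(t)$ denotes the union of the bags $\beta_{\mathcal{D}}(t')$ over $t$ and all its descendants $t'$. *)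

From mathcomp Require Import all_boot fingroup perm.
Set Implicit Arguments. Unset Strict Implicit. Unset Printing Implicit Defensive.

Definition simple_graph (V : finType) (e : rel V) : Prop :=
  (forall x y, e x y = e y x) /\ (forall x, ~~ e x x).

Definition dart (V : finType) (e : rel V) := {p : V * V | e p.1 p.2}.

Definition isolated_vertices (V : finType) (e : rel V) : {set V} :=
  [set v | [forall w, ~~ e v w]].

(* A graph is planar iff it admits a rotation system (a cyclic order of the
   darts around each vertex) whose face count satisfies Euler's formula
   V - E + F = 2 on every connected component (genus 0), i.e.
   V - E + F + #isolated = 2 * #components; written without subtraction and
   with 2E = #darts. *)
Definition planar (V : finType) (e : rel V) : Prop :=
  exists (theta : dart e -> dart e) (sigma : {perm dart e}),
    [/\ (forall d, val (theta d) = ((val d).2, (val d).1)),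
        (forall d, (val (sigma d)).1 = (val d).1),
        (forall d d', (val d).1 = (val d').1 -> fconnect sigma d d') &
        2 * (#|V| + #|[pred d | froots (fun d => sigma (theta d)) d]|
                 + #|isolated_vertices e|)
          = 4 * n_comp e predT + #|{: dart e}| ].

Definition bipartite_with (V : finType) (e : rel V) (W : {set V}) : Prop :=
  forall x y, e x y -> (x \in W) != (y \in W).

(* Half-square adjacency: distance exactly 2 in B. *)
Definition halfsq (V : finType) (e : rel V) : rel V :=
  fun x y => [&& x != y, ~~ e x y & [exists s, e x s && e s y]].

(* A tree: connected graph on N with #N - 1 edges (2(#N-1) darts). *)
Definition is_tree (N : finType) (tE : rel N) : Prop :=
  [/\ simple_graph tE, (forall x y, connect tE x y) &
      #|[set p : N * N | tE p.1 p.2]| = 2 * (#|N| - 1)].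

(* In the tree rooted at r, t' is a descendant of t (or t itself) iff
   t lies on the path from r to t', i.e. t' = t or r cannot reach t'
   while avoiding t. *)
Definition descendant (N : finType) (tE : rel N) (r t t' : N) : bool :=
  (t == t') ||
  ~~ connect (fun a b => [&& tE a b, a != t & b != t]) r t'.

Definition gamma (N V : finType) (tE : rel N) (r : N) (beta : N -> {set V})
  (t : N) : {set V} :=
  \bigcup_(t' | descendant tE r t t') beta t'.

Definition tree_decomposition (N V : finType) (tE : rel N) (r : N)
  (beta : N -> {set V}) (X : {set V}) (e : rel V) : Prop :=
  [/\ is_tree tE,
      (forall t, beta t \subset X),
      (forall v, v \in X -> exists t, v \in beta t),
      (forall u v, u \in X -> v \in X -> e u v ->
          exists t, (u \in beta t) && (v \in beta t)) &
      (forall v t1 t2, v \in beta t1 -> v \in beta t2 ->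
          connect (fun a b => [&& tE a b, v \in beta a & v \in beta b]) t1 t2)].

(* width < l  <->  every bag has at most l vertices *)
Definition width_lt (N V : finType) (beta : N -> {set V}) (l : nat) : Prop :=
  forall t, #|beta t| <= l.

(* The derived bags beta_D'. W = V(G), ~: W = S(G). *)
Definition beta' (N V : finType) (tE : rel N) (r : N) (beta : N -> {set V})
  (eB : rel V) (W : {set V}) (t : N) : {set V} :=
  (beta t :&: W) :|:
  \bigcup_(s in beta t :&: ~: W) ([set x | eB s x] :&: gamma tE r beta t).

From mathcomp Require Import all_boot fingroup perm zify.
Set Implicit Arguments. Unset Strict Implicit. Unset Printing Implicit Defensive.

(** Every bag of D' lies in V(G) because B is bipartite.  If u and v are
    adjacent in G through a special vertex s, the highest node t whose bag
    contains s has all bags containing s below it, so u and v both lie in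
    gamma(t) and hence in beta'(t).  If v enters beta'(t) through a special
    vertex s, then v occurs in some bag below t; either some bag holding both
    s and v lies below t, and the path down to it keeps v in every beta', or
    the subtree of bags containing v passes through t itself. *)

Lemma connect_ind (T : finType) (e : rel T) (x : T) (P : T -> Prop) :
  P x -> (forall y z, connect e x y -> P y -> e y z -> P z) ->
  forall y, connect e x y -> P y.
Proof.
move=> Px step y /connectP [p].
elim/last_ind: p y => [|p z IH] y /=; first by move=> _ ->.
rewrite rcons_path last_rcons => /andP [xp pz] ->.
apply: step (IH _ xp erefl) pz.
by apply/connectP; exists p.
Qed.

Fixpoint ball (T : finType) (e : rel T) (x0 : T) (k : nat) : {set T} :=
  if k is k'.+1 then ball e x0 k' :|: [set y | [exists x in ball e x0 k', e x y]]
  else [set x0].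

Lemma exists_descending_parent (T : finType) (e : rel T) (x0 : T) :
  (forall y, connect e x0 y) ->
  exists (d : T -> nat) (p : T -> T),
    forall y, y != x0 -> e (p y) y && (d (p y) < d y).
Proof.
move=> conn.
have inball y : exists k, y \in ball e x0 k.
  apply: (connect_ind (P := fun w => exists k, w \in ball e x0 k)) (conn y).
    by exists 0; rewrite /= set11.
  move=> w z _ [k wk] wz; exists k.+1; rewrite /= !inE.
  by apply/orP; right; apply/existsP; exists w; rewrite wk.
pose d y := ex_minn (inball y).
have dP y : y \in ball e x0 (d y) /\ forall k, y \in ball e x0 k -> d y <= k.
  by rewrite /d; case: ex_minnP.
have parent y : y != x0 -> exists x, e x y && (d x < d y).
  move=> yx0; have [yd dmin] := dP y; move: yd.
  case Edy: (d y) => [|k] /=; first by rewrite in_set1 (negbTE yx0).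
  rewrite !inE => /orP [yk|/existsP [x /andP [xk xy]]].
    by have := dmin _ yk; rewrite Edy ltnn.
  by exists x; rewrite xy /=; have := (dP x).2 _ xk; lia.
exists d, (fun y => odflt y [pick x | e x y && (d x < d y)]) => y yx0.
by case: pickP => [x //|none]; have [x] := parent y yx0; rewrite none.
Qed.

Lemma card_darts_connected (T : finType) (e : rel T) (x0 : T) :
  symmetric e -> (forall y, connect e x0 y) ->
  2 * (#|T| - 1) <= #|[set q : T * T | e q.1 q.2]|.
Proof.
move=> esym /exists_descending_parent [d [p dp]].
pose A := [set~ x0]; pose up y := (y, p y); pose down y := (p y, y).
have up_inj : injective up by move=> y z /(congr1 fst).
have down_inj : injective down by move=> y z /(congr1 snd).
have disj : up @: A :&: down @: A = set0.
  apply/setP => q; rewrite !inE; apply/negbTE/negP.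
  case/andP => /imsetP [y yA ->] /imsetP [z zA [yz pyz]].
  rewrite !in_setC1 in yA zA.
  by have := dp y yA; have := dp z zA; rewrite pyz -yz => /andP [_ ?] /andP [_ ?]; lia.
have sub : up @: A :|: down @: A \subset [set q : T * T | e q.1 q.2].
  apply/subsetP => q; rewrite !inE => /orP [] /imsetP [y yA ->] /=;
    rewrite in_setC1 in yA; have /andP [pyy _] := dp y yA => //.
  by rewrite esym.
move: (subset_leq_card sub).
by rewrite cardsU disj cards0 !card_imset // cardsC1; lia.
Qed.

Lemma bipartite_with_adj (V : finType) (e : rel V) (W : {set V}) x y :
  bipartite_with e W -> e x y -> (y \in W) = (x \notin W).
Proof. by move=> bip /bip; case: (x \in W); case: (y \in W). Qed.

Section RootedTree.
Variables (N : finType) (tE : rel N) (r : N).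

Definition avoid (c : N) : rel N := fun a b => [&& tE a b, a != c & b != c].
Definition restrict (P : pred N) : rel N := fun a b => [&& tE a b, P a & P b].
Definition connected_in (P : pred N) : Prop :=
  forall x y, P x -> P y -> connect (restrict P) x y.

Local Notation D := (descendant tE r).
Definition subtree (t : N) : {set N} := [set x | D t x].

Lemma descendant_refl t : D t t.
Proof. by rewrite /descendant eqxx. Qed.

Lemma connect_avoid_from t x : connect (avoid t) t x -> x = t.
Proof.
move=> c; apply: (connect_ind (P := fun w => w = t)) c => // y z _ ->.
by case/and3P; rewrite eqxx.
Qed.

Lemma connect_avoid_neq t x y : x != t -> connect (avoid t) x y -> y != t.
Proof.
move=> xt; apply: (connect_ind (P := fun w => w != t)) => //.
by move=> w z _ _ /and3P [].
Qed.

Lemma connect_avoid_through a b x y :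
  connect (avoid a) x y ->
  connect (avoid b) x y \/ connect (avoid a) x b /\ connect (avoid a) b y.
Proof.
apply: (connect_ind (P := fun w =>
  connect (avoid b) x w \/ connect (avoid a) x b /\ connect (avoid a) b w)).
  by left.
move=> w z xw [xw'|[xb bw]] wz.
- have [zb|zn] := eqVneq z b.
    by right; rewrite -zb; split; [apply: connect_trans xw (connect1 wz)|].
  have [wb|wn] := eqVneq w b; first by right; rewrite -wb; split => //; exact: connect1.
  by left; apply: connect_trans xw' (connect1 _); case/and3P: wz => wz _ _; rewrite /avoid wz wn zn.
- by right; split => //; apply: connect_trans bw (connect1 wz).
Qed.

Lemma descendant_trans a b c : D a b -> D b c -> D a c.
Proof.
rewrite /descendant; have [<- _ //|ab /= nab] := eqVneq a b.
have [<- _|bc /= nbc]:= eqVneq b c; first by rewrite nab orbT.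
apply/orP; right; apply/negP => /(connect_avoid_through b) [rc|[rb _]].
  by rewrite rc in nbc.
by rewrite rb in nab.
Qed.

Hypothesis tree_tE : is_tree tE.

Lemma tree_sym : symmetric tE. Proof. by case: tree_tE => [[]]. Qed.
Lemma tree_irr x : ~~ tE x x. Proof. by case: tree_tE => [[]]. Qed.
Lemma tree_connect x y : connect tE x y. Proof. by case: tree_tE. Qed.

Lemma connect_avoid_sym c : connect_sym (avoid c).
Proof.
by apply: sym_connect_sym => x y; rewrite /avoid tree_sym; congr andb; rewrite andbC.
Qed.

Lemma connect_restrict_sym P : connect_sym (restrict P).
Proof.
by apply: sym_connect_sym => x y; rewrite /restrict tree_sym; congr andb; rewrite andbC.
Qed.

Lemma descendant_avoidE t x y : connect (avoid t) x y -> D t x = D t y.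
Proof.
suff imp x' y' : connect (avoid t) x' y' -> D t x' -> D t y'.
  by move=> c; apply/idP/idP; apply: imp; rewrite // connect_avoid_sym.
move=> c; rewrite /descendant; have [//|ty /=] := eqVneq t y'.
have [tx|_ /=] := eqVneq t x'.
  by rewrite -tx in c; rewrite (connect_avoid_from c) eqxx in ty.
by apply: contra => ry; apply: connect_trans ry _; rewrite connect_avoid_sym.
Qed.

Lemma descendant_anti a b : D a b -> D b a -> a = b.
Proof.
rewrite /descendant; have [//|ab /= nab nba] := eqVneq a b.
have [ra|ra] := eqVneq r a; first by rewrite -ra connect0 in nba.
have [rb|rb] := eqVneq r b; first by rewrite -rb connect0 in nab.
(* Along a walk from r to a, whichever of a and b comes first is reached
   from r while avoiding the other one. *)
suff /andP [ra' _] : connect (avoid a) r a && connect (avoid b) r a.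
  by have := connect_avoid_neq ra ra'; rewrite eqxx.
apply: (connect_ind (P := fun w => connect (avoid a) r w && connect (avoid b) r w))
  (tree_connect r a); first by rewrite !connect0.
move=> w z _ /andP [aw bw] wz.
have extend t : r != t -> z != t -> connect (avoid t) r w -> connect (avoid t) r z.
  move=> rt zt tw; have wt := connect_avoid_neq rt tw.
  by apply: connect_trans tw (connect1 _); rewrite /avoid wz zt wt.
have [za|za] := eqVneq z a; first by rewrite -za extend // in nba; rewrite za.
have [zb|zb] := eqVneq z b; first by rewrite -zb extend // in nab; rewrite zb eq_sym.
by rewrite !extend.
Qed.

Definition del_edge (a b : N) : rel N :=
  fun p q => tE p q && ((p, q) \notin [set (a, b); (b, a)]).

Lemma del_edge_sym a b : symmetric (del_edge a b).
Proof.
move=> p q; rewrite /del_edge tree_sym !inE !xpair_eqE; congr (_ && ~~ _).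
by rewrite orbC andbC [(q == b) && _]andbC.
Qed.

(* Otherwise deleting the edge ab would leave a connected graph with fewer
   than 2 (#|N| - 1) darts. *)
Lemma tree_edge_bridge a b : tE a b -> ~~ connect (del_edge a b) a b.
Proof.
move=> ab; apply/negP => cab.
have a_b : a != b by apply: contraTneq ab => ->; exact: tree_irr.
have del_conn y : connect (del_edge a b) a y.
  apply: connect_sub (tree_connect a y) => p q pq.
  case delpq: (del_edge a b p q); first exact: connect1.
  move/negbT: delpq; rewrite {1}/del_edge pq negbK !inE !xpair_eqE.
  by case/orP => /andP [/eqP -> /eqP ->]; rewrite // (sym_connect_sym (del_edge_sym a b)).
have darts_del : [set q : N * N | del_edge a b q.1 q.2]
    = [set q : N * N | tE q.1 q.2] :\: [set (a, b); (b, a)].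
  by apply/setP => -[p q]; rewrite !inE /del_edge /= !inE andbC.
have pair_sub : [set (a, b); (b, a)] \subset [set q : N * N | tE q.1 q.2].
  by apply/subsetP => q; rewrite !inE => /orP [] /eqP -> /=; rewrite // tree_sym.
have := card_darts_connected (del_edge_sym a b) del_conn.
have := subset_leq_card pair_sub.
rewrite darts_del cardsD (setIidPr pair_sub) cards2 xpair_eqE negb_and a_b /=.
(* [set] merges the two differently elaborated copies of #|N| for lia. *)
by case: tree_tE => _ _ ->; set n := #|N|; lia.
Qed.

Lemma tree_no_cycle a b x :
  tE a b -> connect (avoid b) a x -> connect (avoid a) b x -> False.
Proof.
move=> ab ax bx; apply: (negP (tree_edge_bridge ab)).
have avoid_del c : c \in [set a; b] -> subrel (avoid c) (connect (del_edge a b)).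
  case/set2P => -> p q /and3P [pq pc qc]; apply: connect1;
  by rewrite /del_edge pq !inE !xpair_eqE (negbTE pc) (negbTE qc) ?andbF.
have [sa sb] := (connect_sub (avoid_del a (set21 a b)), connect_sub (avoid_del b (set22 a b))).
apply: connect_trans (sb _ _ ax) _.
by rewrite (sym_connect_sym (del_edge_sym a b)); exact: sa bx.
Qed.

Lemma descendant_edge y z : tE y z -> D y z || D z y.
Proof.
move=> yz; apply/contraT; rewrite negb_or /descendant !negb_or !negbK.
case/andP=> /andP [_ ryz] /andP [_ rzy].
by exfalso; apply: (tree_no_cycle (x := r) yz); rewrite connect_avoid_sym.
Qed.

Lemma descendant_child y z t :
  D y t -> tE y z -> connect (avoid y) z t -> D z t.
Proof.
move=> yt yz zt; have [zy|zy] := eqVneq z y; first by rewrite zy.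
have [yt'|yt'] := eqVneq y t.
  by move: (connect_avoid_neq zy zt); rewrite yt' eqxx.
have {yt} nrt : ~~ connect (avoid y) r t by move: yt; rewrite /descendant (negbTE yt').
rewrite /descendant; apply/orP; right; apply/negP => rt.
case: (connect_avoid_through y rt) => [ryt|[_ yt]]; first by rewrite ryt in nrt.
exact: tree_no_cycle yz yt zt.
Qed.

Lemma subtree_proper y z : D y z -> y != z -> subtree z \proper subtree y.
Proof.
move=> yz y_z; apply/properP; split.
  by apply/subsetP => x; rewrite !inE; exact: descendant_trans.
exists y; rewrite !inE ?descendant_refl //.
by apply: contra y_z => zy; rewrite (descendant_anti yz zy).
Qed.

Lemma restrict_exit (P : pred N) y w :
  connect (restrict P) y w -> y != w ->
  exists z, [/\ tE y z, P z & connect (avoid y) z w].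
Proof.
move=> c yw.
suff [wy|//] : w = y \/ exists z, [/\ tE y z, P z & connect (avoid y) z w].
  by rewrite wy eqxx in yw.
apply: (connect_ind (P := fun u =>
  u = y \/ exists z, [/\ tE y z, P z & connect (avoid y) z u])) c; first by left.
move=> u u' _ h /and3P [uu' _ Pu'].
have [->|u'y] := eqVneq u' y; first by left.
case: h => [uy|[z [yz Pz zu]]].
  by right; exists u'; rewrite -uy; split.
have zy : z != y by apply: contraTneq yz => ->; exact: tree_irr.
have uy := connect_avoid_neq zy zu.
right; exists z; split => //; apply: connect_trans zu (connect1 _).
by rewrite /avoid uu' uy u'y.
Qed.

Lemma subtree_top (P : pred N) t1 :
  P t1 -> connected_in P -> exists2 t, P t & forall x, P x -> D t x.
Proof.
move=> Pt1 Pconn; have [t Pt tmax] := arg_maxnP (fun t => #|subtree t|) Pt1.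
exists t => // x Px; apply/contraT => tx.
have t_x : t != x by apply: contra tx => /eqP <-; exact: descendant_refl.
have [z [tz Pz zx]] := restrict_exit (Pconn _ _ Pt Px) t_x.
have zt : D z t.
  by move: (descendant_edge tz); rewrite (descendant_avoidE zx) (negbTE tx).
have t_z : z != t by apply: contraTneq tz => ->; exact: tree_irr.
by have := proper_card (subtree_proper zt t_z); have := tmax z Pz; lia.
Qed.

Lemma connect_restrict_ancestors (P : pred N) y t :
  connected_in P -> P y -> P t -> D y t ->
  connect (restrict (fun w => P w && D w t)) y t.
Proof.
move=> Pconn + Pt; move: {2}#|subtree y|.+1 (ltnSn #|subtree y|) => n.
elim: n y => [//|n IH] y ltn Py yt.
have [<-|y_t] := eqVneq y t; first exact: connect0.
have [z [yz Pz zt]] := restrict_exit (Pconn _ _ Py Pt) y_t.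
have Dzt := descendant_child yt yz zt.
have Dyz : D y z by rewrite (descendant_avoidE zt).
have z_y : y != z by apply: contraTneq yz => ->; exact: tree_irr.
apply: connect_trans (connect1 _) (IH z _ Pz Dzt); first by rewrite /restrict yz Py Pz yt Dzt.
by have := proper_card (subtree_proper Dyz z_y); lia.
Qed.

End RootedTree.

Section DerivedDecomposition.
Variables (VB N : finType) (eB : rel VB) (W : {set VB}).
Variables (tE : rel N) (r : N) (beta : N -> {set VB}).
Hypotheses (eB_sym : symmetric eB) (eB_bip : bipartite_with eB W).
Hypothesis decB : tree_decomposition tE r beta [set: VB] eB.

Local Notation D := (descendant tE r).
Local Notation gammaB := (gamma tE r beta).
Local Notation betaG := (beta' tE r beta eB W).

Let tree_tE : is_tree tE. Proof. by case: decB. Qed.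
Let bag_connected v : connected_in tE (fun t => v \in beta t).
Proof. by case: decB => _ _ _ _ conn x y; exact: conn. Qed.
Let edge_in_bag u v : eB u v -> exists t, (u \in beta t) && (v \in beta t).
Proof. by case: decB => _ _ _ edge _; exact: edge. Qed.

Lemma mem_beta' t v :
  v \in betaG t <-> v \in beta t /\ v \in W \/
    exists s, [/\ s \in beta t, s \notin W, eB s v & v \in gammaB t].
Proof.
rewrite /beta' in_setU in_setI; split.
  case/orP => [/andP [? ?]|/bigcupP [s]]; first by left.
  by rewrite !inE => /andP [sW st] /andP [sv vt]; right; exists s.
case=> [[-> ->] //|[s [st sW sv vt]]]; apply/orP; right.
by apply/bigcupP; exists s; rewrite !inE ?st ?sW ?sv ?vt.
Qed.

Lemma beta'_sub_W t : betaG t \subset W.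
Proof.
apply/subsetP => v /mem_beta' [[_ //]|[s [_ sW sv _]]].
by rewrite (bipartite_with_adj eB_bip sv).
Qed.

Lemma beta'_cover v : v \in W -> exists t, v \in betaG t.
Proof.
move=> vW; case: decB => _ _ cover _ _; have [t vt] := cover v (in_setT v).
by exists t; apply/mem_beta'; left.
Qed.

Lemma beta'_halfsq_edge u v : u \in W -> halfsq eB u v ->
  exists t, (u \in betaG t) && (v \in betaG t).
Proof.
move=> uW /and3P [_ _ /existsP [s /andP [us sv]]].
have sW : s \notin W by rewrite (bipartite_with_adj eB_bip us) uW.
have [tu /andP [utu stu]] := edge_in_bag us.
have [t st top] := subtree_top r tree_tE stu (@bag_connected s).
have [tv /andP [stv vtv]] := edge_in_bag sv.
exists t; apply/andP; split; apply/mem_beta'; right; exists s; split => //.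
- by rewrite eB_sym.
- by apply/bigcupP; exists tu => //; exact: top.
- by apply/bigcupP; exists tv => //; exact: top.
Qed.

Lemma beta'_reach_bag v t : v \in betaG t ->
  exists2 t0, v \in beta t0 & connect (restrict tE (fun a => v \in betaG a)) t t0.
Proof.
case/mem_beta' => [[vt _]|[s [st sW sv /bigcupP [t1 tt1 vt1]]]].
  by exists t => //; exact: connect0.
have [t0 /andP [st0 vt0]] := edge_in_bag sv.
have [tt0|ntt0] := boolP (D t t0).
  exists t0 => //.
  apply: connect_sub (connect_restrict_ancestors tree_tE (@bag_connected s) st st0 tt0).
  move=> a b /and3P [ab /andP [sa a_t0] /andP [sb b_t0]]; apply: connect1.
  by rewrite /restrict ab /=; apply/andP; split; apply/mem_beta'; right; exists s;
    split => //; apply/bigcupP; exists t0.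
exists t; last exact: connect0.
apply/contraT => vt.
have : connect (avoid tE t) t0 t1.
  apply: connect_sub (bag_connected vt0 vt1) => a b /and3P [ab va vb].
  by apply: connect1; rewrite /avoid ab /=; apply/andP; split;
    [apply: (contraTneq _ va) | apply: (contraTneq _ vb)] => ->.
by move/(descendant_avoidE r tree_tE); rewrite tt1 (negbTE ntt0).
Qed.

Lemma beta'_connected v : connected_in tE (fun t => v \in betaG t).
Proof.
move=> t1 t2 vt1 /beta'_reach_bag [s2 vs2 t2s2].
have vW := subsetP (beta'_sub_W t1) v vt1.
have [s1 vs1 t1s1] := beta'_reach_bag vt1.
rewrite (connect_restrict_sym tree_tE) in t2s2.
apply: connect_trans t1s1 (connect_trans _ t2s2).
apply: connect_sub (bag_connected vs1 vs2) => a b /and3P [ab va vb].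
by apply: connect1; rewrite /restrict ab /=; apply/andP; split; apply/mem_beta'; left.
Qed.

End DerivedDecomposition.

Theorem lemma9 (VB : finType) (eB : rel VB) (W : {set VB})
  (N : finType) (tE : rel N) (r : N) (beta : N -> {set VB}) (l : nat) :
  simple_graph eB -> planar eB -> bipartite_with eB W ->
  tree_decomposition tE r beta [set: VB] eB ->
  width_lt beta l ->
  tree_decomposition tE r (beta' tE r beta eB W) W (halfsq eB).
Proof.
move=> [eB_sym _] _ eB_bip decB _; split.
- by case: decB.
- exact: beta'_sub_W eB_bip.
- exact: beta'_cover decB.
- move=> u v uW _ h; exact (beta'_halfsq_edge eB_sym eB_bip decB uW h).
- move=> v; exact (beta'_connected eB_bip decB (v := v)).
Qed.
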